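(* Let $(k,\nu)$ be a valued field with value group contained in $\mathbb{Z}$, let $V$ be a $k$-vector space of finite dimension $r$ with a value function $\operatorname{val}\colon V\to\mathbb{Z}\cup\{\infty\}$, and let $x\in k$ with $\nu(x)=1$. Consider the following procedure, applied to a $k$-basis $B_1,\dots,B_r$ of $V$: for $d=1,\dots,r$ in turn, first replace $B_d$ by $x^{-\operatorname{val}(B_d)}B_d$; then, as long as there exist $\alpha_1,\dots,\alpha_{d-1}\in k$ with $\operatorname{val}(\alpha_1B_1+\cdots+\alpha_{d-1}B_{d-1}+B_d)>0$, choose such $\alpha_1,\dots,\alpha_{d-1}$ and replace $B_d$ by $x^{-1}(\alpha_1B_1+\cdots+\alpha_{d-1}B_{d-1}+B_d)$. Finally return $B_1,\dots,B_r$. Then the procedure is correct: whenever it terminates, the returned elements $B_1,\dots,B_r$ form a $k$-basis of $V$ which is also an $\mathcal{O}_{(k,\nu)}$-module basis of the module $\mathcal{O}_{(V,\operatorname{val})}$ of integral elements of $V$ (i.e. a local integral basis of $V$ with respect to $\operatorname{val}$).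
   Context: A valuation on a field $k$ (of characteristic zero) with values in $\mathbb{Z}\cup\{\infty\}$ is a map $\nu$ with $\nu(a)=\infty\iff a=0$, $\nu(ab)=\nu(a)+\nu(b)$, $\nu(a+b)\ge\min\{\nu(a),\nu(b)\}$; $\mathcal{O}_{(k,\nu)}=\{a\in k:\nu(a)\ge0\}$. A value function on a $k$-vector space $V$ is a map $\operatorname{val}\colon V\to\mathbb{Z}\cup\{\infty\}$ with $\operatorname{val}(v)=\infty\iff v=0$, $\operatorname{val}(av)=\nu(a)+\operatorname{val}(v)$ for $a\in k$, and $\operatorname{val}(v+w)\ge\min\{\operatorname{val}(v),\operatorname{val}(w)\}$. An element $v$ is integral if $\operatorname{val}(v)\ge0$, and $\mathcal{O}_{(V,\operatorname{val})}$ denotes the set of integral elements. *)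

From HB Require Import structures.
From mathcomp Require Import all_boot all_order all_algebra.
Set Implicit Arguments. Unset Strict Implicit. Unset Printing Implicit Defensive.
Import Order.TTheory GRing.Theory Num.Theory.
Local Open Scope ring_scope.

(* Z ∪ {∞}: [Some n] is the integer n, [None] is ∞. *)
Definition zinf := option int.

Definition zi_le (a b : zinf) : bool :=
  match a, b with
  | _, None => true
  | None, Some _ => false
  | Some m, Some n => (m <= n)%R
  end.

Definition zi_add (a b : zinf) : zinf :=
  match a, b with
  | Some m, Some n => Some (m + n)%R
  | _, _ => None
  end.

Definition zi_min (a b : zinf) : zinf := if zi_le a b then a else b.

Definition zi_gt0 (a : zinf) : bool :=
  match a with None => true | Some n => (0 < n)%R end.

Definition is_valuation (k : fieldType) (nu : k -> zinf) : Prop :=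
  [/\ forall a, nu a = None <-> a = 0,
      forall a b, nu (a * b) = zi_add (nu a) (nu b)
    & forall a b, zi_le (zi_min (nu a) (nu b)) (nu (a + b))].

Definition is_value_function (k : fieldType) (nu : k -> zinf)
    (V : vectType k) (val : V -> zinf) : Prop :=
  [/\ forall v, val v = None <-> v = 0,
      forall (a : k) (v : V), val (a *: v) = zi_add (nu a) (val v)
    & forall v w, zi_le (zi_min (val v) (val w)) (val (v + w))].

Definition integralk (k : fieldType) (nu : k -> zinf) (a : k) : bool :=
  zi_le (Some 0%R) (nu a).
Definition integralV (k : fieldType) (V : vectType k) (val : V -> zinf) (v : V) : bool :=
  zi_le (Some 0%R) (val v).

Definition is_integral_basis (k : fieldType) (nu : k -> zinf)
    (V : vectType k) (val : V -> zinf) (B : seq V) : Prop :=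
  [/\ forall i, (i < size B)%N -> integralV val (B`_i),
      forall v, integralV val v ->
        exists c : 'I_(size B) -> k,
          (forall i, integralk nu (c i)) /\ v = \sum_(i < size B) c i *: B`_i
    & forall c : 'I_(size B) -> k, (forall i, integralk nu (c i)) ->
        \sum_(i < size B) c i *: B`_i = 0 -> forall i, c i = 0].

Section Procedure.
Variables (k : fieldType) (V : vectType k) (val : V -> zinf) (x : k).

(* linear combination alpha_1 B_1 + ... + alpha_(d-1) B_(d-1) + B_d
   (0-based indices: B`_0, ..., B`_(d-1), plus B`_d) *)
Definition comb (d : nat) (B : seq V) (a : 'I_d -> k) : V :=
  \sum_(i < d) a i *: B`_i + B`_d.
Arguments comb : clear implicits.

Inductive loop_run (d : nat) : seq V -> seq V -> Prop :=
| loop_stop (B : seq V) :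
    ~ (exists a : 'I_d -> k, zi_gt0 (val (comb d B a))) -> loop_run d B B
| loop_step (B B' : seq V) (a : 'I_d -> k) :
    zi_gt0 (val (comb d B a)) ->
    loop_run d (set_nth 0 B d (x^-1 *: comb d B a)) B' ->
    loop_run d B B'.

Definition stage_run (d : nat) (B B' : seq V) : Prop :=
  exists n : int, val (B`_d) = Some n /\
    loop_run d (set_nth 0 B d (x ^ (- n) *: B`_d)) B'.

Inductive run_from (r : nat) : nat -> seq V -> seq V -> Prop :=
| run_end (B : seq V) : run_from r r B B
| run_next (d : nat) (B B1 B2 : seq V) :
    (d < r)%N -> stage_run d B B1 -> run_from r d.+1 B1 B2 -> run_from r d B B2.

Definition procedure_run (r : nat) (B B' : seq V) : Prop := run_from r 0 B B'.

End Procedure.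

From HB Require Import structures.
From mathcomp Require Import all_boot all_order all_algebra.
From mathcomp Require Import zify.
Import Order.TTheory GRing.Theory Num.Theory.
Local Open Scope ring_scope.

(* Each update replaces [B_d] by some [w] with [c w = a_0 B_0 + ... + a_(d-1) B_(d-1) + B_d],
   so [B_d] stays in the span of the new family, which is therefore still a basis. After the
   normalisation [B_d] has value 0, and every loop step divides a combination of positive value
   by [x], so [B_d] stays integral; when stage [d] ends, [B_d] is moreover reduced: no
   combination [a_0 B_0 + ... + a_(d-1) B_(d-1) + B_d] has positive value.
   For a family whose members are integral and reduced, [val (sum_i c_i B_i) >= m] forces
   [nu c_i >= m] for all [i]: if the last coefficient had [nu c_j < m], dividing by [c_j] would
   produce a combination ending in [B_j] of positive value; otherwise [c_j B_j] has value
   [>= m] and one inducts on [j]. With [m = 0] this says that the coordinates of an integral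
   vector are integral. *)

Lemma zi_le_trans a b c : zi_le a b -> zi_le b c -> zi_le a c.
Proof. by case: a b c => [a|] [b|] [c|] //=; exact: le_trans. Qed.

Lemma zi_le_min a b c : zi_le a b -> zi_le a c -> zi_le a (zi_min b c).
Proof. by rewrite /zi_min; case: ifP. Qed.

Section Valuation.
Context {k : fieldType} {nu : k -> zinf} (hnu : is_valuation nu).

Lemma nu_None a : nu a = None <-> a = 0. Proof. by case: hnu. Qed.

Lemma nuM a b : nu (a * b) = zi_add (nu a) (nu b). Proof. by case: hnu. Qed.

Lemma nu0 : nu 0 = None. Proof. exact/nu_None. Qed.

Lemma nu_Some_neq0 {a t} : nu a = Some t -> a != 0.
Proof. by move=> nua; apply/eqP => a0; move: nua; rewrite a0 nu0. Qed.

Lemma nu_neq0_Some a : a != 0 -> exists t, nu a = Some t.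
Proof.
case E: (nu a) => [t|]; first by exists t.
by move: E => /nu_None ->; rewrite eqxx.
Qed.

Lemma nu1 : nu 1 = Some 0.
Proof.
have [t nu1] : exists t, nu 1 = Some t by apply: nu_neq0_Some; exact: oner_neq0.
by have := nuM 1 1; rewrite mulr1 nu1 => -[e]; congr Some; lia.
Qed.

Lemma nuN1 : nu (-1) = Some 0.
Proof.
have [t nuN1] : exists t, nu (-1) = Some t by apply: nu_neq0_Some; rewrite oppr_eq0 oner_neq0.
by have := nuM (-1) (-1); rewrite mulrNN mulr1 nu1 nuN1 => -[e]; congr Some; lia.
Qed.

Lemma nuV {a t} : nu a = Some t -> nu a^-1 = Some (- t).
Proof.
move=> nua; have := nuM a a^-1; rewrite mulfV; last exact: nu_Some_neq0 nua.
rewrite nu1 nua.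
by case: (nu a^-1) => [s|] //= -[e]; congr Some; lia.
Qed.

Lemma nu_expn {a t} n : nu a = Some t -> nu (a ^+ n) = Some (n%:Z * t).
Proof.
move=> nua; elim: n => [|n IH]; first by rewrite expr0 nu1 mul0r.
by rewrite exprS nuM nua IH intS mulrDl mul1r.
Qed.

Lemma nu_expz {a t} z : nu a = Some t -> nu (a ^ z) = Some (z * t).
Proof.
move=> nua; case: z => n; first exact: nu_expn.
by rewrite NegzE -exprnN (nuV (nu_expn n.+1 nua)) mulNr.
Qed.

Section ValueFunction.
Context {V : vectType k} {val : V -> zinf} (hval : is_value_function nu val).

Lemma valZ a v : val (a *: v) = zi_add (nu a) (val v). Proof. by case: hval. Qed.

Lemma valD v w : zi_le (zi_min (val v) (val w)) (val (v + w)). Proof. by case: hval. Qed.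

Lemma valN v : val (- v) = val v.
Proof. by rewrite -scaleN1r valZ nuN1; case: (val v) => //= t; rewrite add0r. Qed.

Lemma val_geD [m v w] : zi_le (Some m) (val v) -> zi_le (Some m) (val w) ->
  zi_le (Some m) (val (v + w)).
Proof. by move=> v_ge w_ge; apply: zi_le_trans (valD v w); exact: zi_le_min. Qed.

Lemma val_geB [m v w] : zi_le (Some m) (val v) -> zi_le (Some m) (val w) ->
  zi_le (Some m) (val (v - w)).
Proof. by move=> v_ge w_ge; apply: val_geD; rewrite ?valN. Qed.

Definition reduced d (B : seq V) := forall a : 'I_d -> k, ~~ zi_gt0 (val (comb B a)).

Definition reduced_upto n (B : seq V) :=
  forall i, (i < n)%N -> integralV val B`_i /\ reduced i B.

Lemma eq_comb [d] [B B' : seq V] (a : 'I_d -> k) :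
  (forall i, (i <= d)%N -> B'`_i = B`_i) -> comb B' a = comb B a.
Proof.
move=> eqB; rewrite /comb eqB //; congr (_ + _).
by apply: eq_bigr => i _; rewrite eqB // ltnW.
Qed.

Lemma eq_reduced d (B B' : seq V) :
  (forall i, (i <= d)%N -> B'`_i = B`_i) -> reduced d B -> reduced d B'.
Proof. by move=> eqB redB a; rewrite (eq_comb a eqB). Qed.

Lemma reduced_coef_ge [n] [B : seq V] [a : 'I_n -> k] [c m] : reduced n B ->
  zi_le (Some m) (val (\sum_(i < n) a i *: B`_i + c *: B`_n)) -> zi_le (Some m) (nu c).
Proof.
move=> redB sum_ge; case nuc: (nu c) => [t|] //=; rewrite leNgt; apply/negP => t_lt.
have c0 := nu_Some_neq0 nuc.
apply: (negP (redB (fun i => c^-1 * a i))).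
have -> : comb B (fun i => c^-1 * a i) =
          c^-1 *: (\sum_(i < n) a i *: B`_i + c *: B`_n).
  rewrite /comb scalerDr scalerA mulVf // scale1r scaler_sumr.
  by congr (_ + _); apply: eq_bigr => i _; rewrite scalerA.
by rewrite valZ (nuV nuc); move: sum_ge; case: (val _) => //= s; lia.
Qed.

Lemma reduced_upto_coef_ge [n] [B : seq V] [c : 'I_n -> k] [m] :
  reduced_upto n B -> zi_le (Some m) (val (\sum_(i < n) c i *: B`_i)) ->
  forall i, zi_le (Some m) (nu (c i)).
Proof.
elim: n c => [|n IH] c redB sum_ge i; first by case: i.
have [intBn redBn] := redB n (ltnSn n).
set c' := fun j => c (widen_ord (leqnSn n) j).
have sumE : \sum_(j < n.+1) c j *: B`_j = \sum_(j < n) c' j *: B`_j + c ord_max *: B`_n.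
  by rewrite big_ord_recr.
rewrite sumE in sum_ge.
have cn_ge := reduced_coef_ge redBn sum_ge.
have [i_lt|i_ge] := ltnP i n; last first.
  by have -> : i = ord_max by apply: val_inj => /=; have := ltn_ord i; lia.
have -> : i = widen_ord (leqnSn n) (Ordinal i_lt) by exact: val_inj.
apply: (IH c') => [j j_lt|]; first exact: redB j (leqW j_lt).
have cnBn_ge : zi_le (Some m) (val (c ord_max *: B`_n)).
  rewrite valZ; move: cn_ge intBn; rewrite /integralV.
  by case: (nu _) => [s|] //; case: (val _) => [t|] //= *; lia.
by have := val_geB sum_ge cnBn_ge; rewrite addrK.
Qed.

Definition replaces_at d (B B' : seq V) :=
  size B' = size B /\ forall i, i != d -> B'`_i = B`_i.

Lemma replaces_at_trans d (B1 B2 B3 : seq V) :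
  replaces_at d B1 B2 -> replaces_at d B2 B3 -> replaces_at d B1 B3.
Proof.
move=> [size12 eq12] [size23 eq23]; split=> [|i i_neq]; first by rewrite size23.
by rewrite eq23 // eq12.
Qed.

Lemma replaces_at_set_nth [d] [B : seq V] w :
  (d < size B)%N -> replaces_at d B (set_nth 0 B d w).
Proof.
move=> d_lt; split=> [|i i_neq]; first by rewrite size_set_nth; apply/maxn_idPr.
by rewrite nth_set_nth /= (negbTE i_neq).
Qed.

Lemma basis_set_nth [d] [B : seq V] [a : 'I_d -> k] [c w] :
  basis_of fullv B -> (d < size B)%N -> comb B a = c *: w ->
  basis_of fullv (set_nth 0 B d w).
Proof.
move=> basisB d_lt combE; set N := set_nth 0 B d w.
have [sizeN eqN] := replaces_at_set_nth w d_lt.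
have inN i : (i < size B)%N -> N`_i \in <<N>>%VS.
  by move=> i_lt; rewrite memv_span // mem_nth // sizeN.
move: basisB; rewrite !basisEdim sizeN => /andP[spanB ->]; rewrite andbT.
apply: subv_trans spanB _; apply/span_subvP => _ /(nthP 0) [i i_lt <-].
have [->|i_neq] := eqVneq i d; last by rewrite -eqN ?inN.
have -> : B`_d = c *: N`_d - \sum_(i < d) a i *: N`_i.
  rewrite nth_set_nth /= eqxx -combE /comb.
  under [X in _ - X]eq_bigr => j _ do rewrite eqN ?(ltn_eqF (ltn_ord j)) //.
  by rewrite addrC addKr.
rewrite rpredB ?rpredZ ?inN // rpred_sum // => j _.
by rewrite rpredZ ?inN // (ltn_trans (ltn_ord j)).
Qed.

Definition stage_spec d (B B' : seq V) :=
  [/\ basis_of fullv B', replaces_at d B B', integralV val B'`_d & reduced d B'].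

Section Procedure.
Context {x : k} (hx : nu x = Some 1).

Lemma loop_run_spec [d] [B B' : seq V] : loop_run val x d B B' ->
  basis_of fullv B -> (d < size B)%N -> integralV val B`_d -> stage_spec d B B'.
Proof.
elim=> {B B'} [B stop | B B' a comb_gt0 _ IH] basisB d_lt intBd.
  by split=> // a; apply/negP => comb_gt0; apply: stop; exists a.
set w := x^-1 *: comb B a.
have rep := replaces_at_set_nth w d_lt.
have [basisB' rep' intB' redB'] : stage_spec d (set_nth 0 B d w) B'.
  apply: IH; last 1 first.
  - rewrite nth_set_nth /= eqxx /integralV /w valZ (nuV hx).
    by move: comb_gt0; case: (val _) => //= t; lia.
  - apply: (basis_set_nth (a := a) (c := x)) basisB d_lt _.
    by rewrite /w scalerA mulfV ?scale1r // (nu_Some_neq0 hx).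
  - by rewrite rep.1.
by split=> //; apply: replaces_at_trans rep'.
Qed.

Lemma stage_run_spec [d] [B B' : seq V] : stage_run val x d B B' ->
  basis_of fullv B -> (d < size B)%N -> stage_spec d B B'.
Proof.
case=> n [valBd loop] basisB d_lt.
set w := x ^ (- n) *: B`_d.
have rep := replaces_at_set_nth w d_lt.
have [basisB' rep' intB' redB'] : stage_spec d (set_nth 0 B d w) B'.
  apply: loop_run_spec loop _ _ _.
  - apply: (basis_set_nth (a := fun=> 0) (c := x ^ n)) basisB d_lt _.
    rewrite /comb big1 ?add0r => [|i _]; last by rewrite scale0r.
    by rewrite /w scalerA -expfzDr ?(nu_Some_neq0 hx) // subrr expr0z scale1r.
  - by rewrite rep.1.
  - by rewrite nth_set_nth /= eqxx /integralV /w valZ (nu_expz _ hx) valBd /= mulr1 addNr.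
by split=> //; apply: replaces_at_trans rep'.
Qed.

Lemma run_from_spec [r d] [B B' : seq V] : run_from val x r d B B' ->
  basis_of fullv B -> size B = r -> reduced_upto d B ->
  [/\ basis_of fullv B', size B' = r & reduced_upto r B'].
Proof.
elim=> {d B B'} [B | d B B1 B2 d_lt stage _ IH] basisB sizeB redB; first by split.
have d_lt' : (d < size B)%N by rewrite sizeB.
have [basisB1 [sizeB1 eqB1] intB1 redB1] := stage_run_spec stage basisB d_lt'.
apply: IH => //; first by rewrite sizeB1.
move=> i; rewrite ltnS leq_eqVlt => /orP[/eqP -> // | i_lt].
have [intBi redBi] := redB i i_lt.
split; first by rewrite eqB1 // ltn_eqF.
apply: eq_reduced redBi => j j_le; apply: eqB1.
by rewrite ltn_eqF // (leq_ltn_trans j_le i_lt).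
Qed.

End Procedure.
End ValueFunction.
End Valuation.

Theorem mainTheorem2 (k : fieldType) (hchar : [pchar k] =i pred0)
    (nu : k -> zinf) (hnu : is_valuation nu)
    (V : vectType k) (r : nat) (hr : \dim (fullv : {vspace V}) = r)
    (val : V -> zinf) (hval : is_value_function nu val)
    (x : k) (hx : nu x = Some 1%R)
    (B : seq V) (hB : basis_of fullv B) (B' : seq V) :
  procedure_run val x r B B' ->
  basis_of fullv B' /\ is_integral_basis nu val B'.
Proof.
move=> run.
have sizeB : size B = r by rewrite -hr (size_basis (X := in_tuple B) hB).
have redB : reduced_upto (val := val) 0 B by move=> i; rewrite ltn0.
have [basisB' sizeB' redB'] := run_from_spec hnu hval hx run hB sizeB redB.
rewrite -sizeB' in redB'; set X := in_tuple B'.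
have coordE v : v = \sum_(i < size B') coord X i v *: B'`_i.
  exact: (coord_basis (X := X) basisB' (memvf v)).
split=> //; split.
- by move=> i /redB'[].
- move=> v intv; exists (coord X ^~ v); split=> // i.
  by apply: (reduced_upto_coef_ge hnu hval (c := coord X ^~ v) redB'); rewrite -coordE.
- by move=> c _; apply: (freeP (X := X) (basis_free basisB')).
Qed.
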